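(* Let $\theta:\mathbb{R}^n\to\mathbb{R}^K$, $x^\star\in\mathbb{R}^n$, $u\in\mathbb{R}^n$, a matrix $J\in\mathbb{R}^{K\times n}$ and a class index $k^\star\in\{1,\dots,K\}$ be such that $\theta(x^\star+\alpha u)-\theta(x^\star)=\alpha Ju$ for all $\alpha>0$. Set $\tilde{x}=x^\star+\alpha u$ and $\Delta\ell(\alpha)=\ell(\tilde{x},\bm{e}_{k^\star};\theta)-\ell(x^\star,\bm{e}_{k^\star};\theta)$. If $\ell=\ell_{CE}$ is the cross-entropy loss, then $$\lim_{\alpha\to\infty}\frac{\Delta\ell_{CE}(\alpha)}{\alpha}=\max_i(Ju)_i-(Ju)_{k^\star}.$$ If $\ell=\ell_{DLR}$ is the DLR loss, then $$\lim_{\alpha\to\infty}\frac{\Delta\ell_{DLR}(\alpha)}{\alpha}=\max_{i\neq k^\star}(Ju)_i-(Ju)_{k^\star}.$$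
   Context: $\bm{e}_k$ is the $k$-th standard basis vector of $\mathbb{R}^K$. Cross-entropy loss: $\ell_{CE}(x,\bm{e}_k;\theta)=-\log\operatorname{softmax}(\theta(x))_k=-\theta(x)_k+\log\sum_{j}e^{\theta(x)_j}$. DLR loss (as used in the paper): $\ell_{DLR}(x,\bm{e}_k;\theta)=\max_{j\neq k}\theta(x)_j-\theta(x)_k$. In the paper this lemma is applied with $J=J_{\bm{D}^\star}$ the constant Jacobian of a ReLU network on an activation cell and $u=u^\star_t$ a direction in the recession cone of that cell, which guarantees the stated affine relation. *)

From mathcomp Require Import all_boot all_order all_algebra.
From mathcomp Require Import all_classical all_reals all_analysis.
Set Implicit Arguments. Unset Strict Implicit. Unset Printing Implicit Defensive.
Import Order.TTheory GRing.Theory Num.Theory.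
Local Open Scope ring_scope.

Definition ce_loss (R : realType) (K : nat) (z : 'cV[R]_K) (k : 'I_K) : R :=
  - z k 0 + ln (\sum_(j < K) expR (z j 0)).

(* max_{j <> k} of the entries of z (computed in \bar R with seed -oo,
   finite as soon as K >= 2) *)
Definition max_except (R : realType) (K : nat) (v : 'cV[R]_K) (k : 'I_K) : R :=
  fine (\big[Order.max/-oo%E]_(j < K | j != k) ((v j 0)%:E)).

Definition max_all (R : realType) (K : nat) (v : 'cV[R]_K) : R :=
  fine (\big[Order.max/-oo%E]_(j < K) ((v j 0)%:E)).

Definition dlr_loss (R : realType) (K : nat) (z : 'cV[R]_K) (k : 'I_K) : R :=
  max_except z k - z k 0.

(* Along the ray the logits are [z + a v].  Up to an error bounded
   independently of [a], both losses are positively homogeneous in the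
   logits: log-sum-exp lies between the max and the max plus [ln K], and a
   finite max commutes with positive scaling and moves by at most [sup |z|]
   when [z] is added.  So the loss increment at [a] stays within a constant
   of [a] times the claimed slope, and dividing by [a] gives the limit. *)

From mathcomp Require Import all_boot all_order all_algebra.
From mathcomp Require Import all_classical all_reals all_analysis.
From mathcomp Require Import ring lra.
Import Order.TTheory GRing.Theory Num.Theory.
Import numFieldNormedType.Exports.
Local Open Scope classical_set_scope.
Local Open Scope ring_scope.

Section FiniteMax.
Variables (R : realType) (I : finType) (P : pred I).

(* [max_all] and [max_except] are instances by conversion.  On an empty [P]
   the value is [fine -oo = 0], hence the nonemptiness hypotheses below. *)
Definition fmax (f : I -> R) : R :=
  fine (\big[Order.max/-oo%E]_(i | P i) (f i)%:E).

Lemma fmax_attained (f : I -> R) {i0 : I} :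
  P i0 -> exists2 i, P i & fmax f = f i.
Proof.
move=> Pi0; rewrite /fmax.
have [i Pi ->] := eq_bigmax i0 P (fun i => (f i)%:E) Pi0 (fun i _ => leNye _).
by exists i.
Qed.

Lemma fmax_ge (f : I -> R) {i : I} : P i -> f i <= fmax f.
Proof.
move=> Pi; have := le_bigmax_cond -oo%E (fun i => (f i)%:E) Pi.
rewrite /fmax; have [j _ ->] := eq_bigmax i P (fun i => (f i)%:E) Pi (fun i _ => leNye _).
by rewrite lee_fin.
Qed.

Lemma fmax_scale (f : I -> R) (a : R) {i0 : I} : P i0 -> 0 <= a ->
  fmax (fun i => a * f i) = a * fmax f.
Proof.
move=> Pi0 a0; apply/le_anti/andP; split.
- have [i Pi ->] := fmax_attained (fun i => a * f i) Pi0.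
  by rewrite ler_wpM2l // fmax_ge.
- have [i Pi ->] := fmax_attained f Pi0.
  exact: (fmax_ge (fun i => a * f i)).
Qed.

Lemma fmax_lipschitz (f g : I -> R) (B : R) {i0 : I} : P i0 ->
  (forall i, P i -> `|f i - g i| <= B) -> `|fmax f - fmax g| <= B.
Proof.
move=> Pi0 fg; have [i Pi Ei] := fmax_attained f Pi0.
have [j Pj Ej] := fmax_attained g Pi0.
have := fmax_ge g Pi; have := fmax_ge f Pj.
have /ler_normlP[fgi1 fgi2] := fg i Pi; have /ler_normlP[fgj1 fgj2] := fg j Pj.
rewrite ler_norml Ei Ej => gi fj; apply/andP; split; lra.
Qed.

Lemma fmax_affine_near (z v : I -> R) (a B : R) {i0 : I} : P i0 -> 0 <= a ->
  (forall i, P i -> `|z i| <= B) ->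
  `|fmax (fun i => z i + a * v i) - a * fmax v| <= B.
Proof.
move=> Pi0 a0 zB; rewrite -(fmax_scale v a Pi0 a0).
by apply: fmax_lipschitz Pi0 _ => i Pi; rewrite addrK; exact: zB.
Qed.

End FiniteMax.

Arguments fmax {R I} P f.

Lemma ln_sum_expR_bounds {R : realType} {I : finType} (f : I -> R) (i0 : I) :
  fmax xpredT f <= ln (\sum_i expR (f i)) <= fmax xpredT f + ln #|I|%:R.
Proof.
have [j _ Ej] := @fmax_attained _ _ xpredT f i0 isT.
set m := fmax xpredT f; set S := \sum_i expR (f i).
have Sge : expR (f j) <= S.
  by rewrite /S (bigD1 j) //= lerDl sumr_ge0 // => i _; exact: expR_ge0.
have S0 : 0 < S := lt_le_trans (expR_gt0 _) Sge.
have Sle : S <= #|I|%:R * expR m.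
  rewrite /S mulr_natl -sumr_const; apply: ler_sum => i _.
  by rewrite ler_expR fmax_ge.
have I0 : (0 < #|I|)%N by apply/card_gt0P; exists i0.
apply/andP; split.
- by rewrite /m Ej -[X in X <= _]expRK ler_ln ?posrE ?expR_gt0.
- rewrite addrC -[X in _ <= _ + X]expRK -lnM ?posrE ?expR_gt0 ?ltr0n //.
  by rewrite ler_ln // posrE mulr_gt0 ?expR_gt0 ?ltr0n.
Qed.

Lemma cvg_slope_pinfty {R : realType} (f : R -> R) (L : R) :
  (exists C, forall a, 0 < a -> `|f a - a * L| <= C) ->
  (fun a => f a / a) @ +oo --> L.
Proof.
move=> [C fC]; apply/cvgrPdist_le => e e0.
have C0 : 0 <= C by apply: le_trans (fC 1 ltr01); exact: normr_ge0.
near=> a.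
have a0 : 0 < a by near: a; apply: nbhs_pinfty_gt; rewrite num_real.
have aC : C / e < a by near: a; apply: nbhs_pinfty_gt; rewrite num_real.
have -> : L - f a / a = - ((f a - a * L) / a) by field; rewrite gt_eqF.
rewrite normrN normrM normfV (gtr0_norm a0) ler_pdivrMr //.
apply: le_trans (fC a a0) _.
by rewrite -ler_pdivrMl // mulrC ltW.
Unshelve. all: end_near.
Qed.

Section AffineLogits.
Context {R : realType} {K : nat} (z v : 'cV[R]_K) (k : 'I_K).

Let B := fmax xpredT (fun j => `|z j 0|).

Lemma ce_loss_affine_gap : exists C, forall a, 0 < a ->
  `|ce_loss (z + a *: v) k - ce_loss z k - a * (max_all v - v k 0)| <= C.
Proof.
exists (B + ln K%:R + `|z k 0| + `|ce_loss z k|) => a a0.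
set w := z + a *: v.
have near_max : `|max_all w - a * max_all v| <= B.
  rewrite /max_all; under eq_bigr do rewrite !mxE.
  apply: (@fmax_affine_near _ _ xpredT _ _ _ _ k isT (ltW a0)).
  by move=> j _; exact: fmax_ge.
have lse : max_all w <= ln (\sum_j expR (w j 0)) <= max_all w + ln K%:R.
  by have := ln_sum_expR_bounds (fun j => w j 0) k; rewrite card_ord.
have wk : w k 0 = z k 0 + a * v k 0 by rewrite !mxE.
have /ler_normlP[zk1 zk2] := lexx `|z k 0|.
have /ler_normlP[cez1 cez2] := lexx `|ce_loss z k|.
move: near_max lse cez1 cez2; rewrite /ce_loss wk.
move=> /ler_normlP[m1 m2] /andP[l1 l2] cez1 cez2.
rewrite mulrBr ler_norml; apply/andP; split; lra.
Qed.

Lemma dlr_loss_affine_gap : (1 < K)%N -> exists C, forall a, 0 < a ->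
  `|dlr_loss (z + a *: v) k - dlr_loss z k - a * (max_except v k - v k 0)| <= C.
Proof.
move=> K1; have [j jk] : exists j : 'I_K, j != k.
  have : (0 < #|predC1 k|)%N by rewrite cardC1 card_ord -subn1 subn_gt0.
  by case/card_gt0P => j; rewrite inE; exists j.
exists (B + `|z k 0| + `|dlr_loss z k|) => a a0.
set w := z + a *: v.
have near_max : `|max_except w k - a * max_except v k| <= B.
  rewrite /max_except; under eq_bigr do rewrite !mxE.
  apply: (@fmax_affine_near _ _ (fun i => i != k) _ _ _ _ j jk (ltW a0)).
  by move=> i _; exact: fmax_ge.
have wk : w k 0 = z k 0 + a * v k 0 by rewrite !mxE.
have /ler_normlP[zk1 zk2] := lexx `|z k 0|.
have /ler_normlP[dz1 dz2] := lexx `|dlr_loss z k|.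
move: near_max dz1 dz2; rewrite /dlr_loss wk => /ler_normlP[m1 m2] dz1 dz2.
rewrite mulrBr ler_norml; apply/andP; split; lra.
Qed.

End AffineLogits.

Theorem lemma1 (R : realType) (n K : nat)
  (theta : 'cV[R]_n -> 'cV[R]_K) (xs u : 'cV[R]_n) (J : 'M[R]_(K, n))
  (ks : 'I_K)
  (Haff : forall alpha : R, 0 < alpha ->
     theta (xs + alpha *: u) - theta xs = alpha *: (J *m u)) :
  ((fun alpha : R =>
      (ce_loss (theta (xs + alpha *: u)) ks - ce_loss (theta xs) ks) / alpha)
     @ +oo --> max_all (J *m u) - (J *m u) ks 0)
  /\
  ((1 < K)%N ->
   (fun alpha : R =>
      (dlr_loss (theta (xs + alpha *: u)) ks - dlr_loss (theta xs) ks) / alpha)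
     @ +oo --> max_except (J *m u) ks - (J *m u) ks 0).
Proof.
have theta_affine a : 0 < a -> theta (xs + a *: u) = theta xs + a *: (J *m u).
  by move=> a0; rewrite -Haff // addrCA subrr addr0.
split=> [|K1]; apply: cvg_slope_pinfty.
- have [C gap] := ce_loss_affine_gap (theta xs) (J *m u) ks.
  by exists C => a a0; rewrite theta_affine //; exact: gap.
- have [C gap] := dlr_loss_affine_gap (theta xs) (J *m u) ks K1.
  by exists C => a a0; rewrite theta_affine //; exact: gap.
Qed.
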